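(* Let $\mathcal C$ be a hyper-extensive category and $H\colon\mathcal C\to\mathcal C$ a functor preserving countable coproducts and having a terminal coalgebra $t\colon \nu H\to H(\nu H)$. For every object $Y$, put $H^*Y=\coprod_{n<\omega}H^nY$ with coproduct injections $j_n\colon H^nY\to H^*Y$, and let $\phi_Y\colon HH^*Y\cong\coprod_{n<\omega}H^{n+1}Y\to H^*Y$ be the morphism with $\phi_Y\cdot Hj_n=j_{n+1}$ for all $n$. Then the free cia on $Y$ is $$CY=H^*Y+\nu H$$ with algebra structure $H(H^*Y+\nu H)\cong HH^*Y+H(\nu H)\xrightarrow{\phi_Y+t^{-1}}H^*Y+\nu H$ and universal morphism $\mathrm{inl}\cdot j_0\colon Y\to H^*Y+\nu H$. More precisely, $H^*Y+\nu H$ with the coalgebra structure $H^*Y+\nu H\xrightarrow{\sigma_Y+t}Y+HH^*Y+H(\nu H)\cong Y+H(H^*Y+\nu H)$, where $\sigma_Y$ is the inverse of the isomorphism $[j_0,\phi_Y]\colon Y+HH^*Y\to H^*Y$, is a terminal coalgebra for the functor $Y+H(-)$.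
   Context: A category is hyper-extensive if it has countable coproducts which are (1) universal: pullbacks along arbitrary morphisms exist and preserve countable coproducts; (2) disjoint: coproduct injections are monomorphisms and any two distinct injections have pullback the initial object $0$; (3) coherent: if $a_n\colon A_n\to A$ ($n\in\mathbb N$) are pairwise disjoint morphisms each of which is a coproduct injection, then $[a_n]_{n}\colon\coprod_n A_n\to A$ is a coproduct injection. By Lambek's lemma the terminal coalgebra structure $t$ is invertible, so $(\nu H,t^{-1})$ is an $H$-algebra. An $H$-algebra $a\colon HA\to A$ is a cia (completely iterative algebra) if for every morphism $e\colon X\to HX+A$ there is a unique $s\colon X\to A$ with $s=[a,\mathrm{id}_A]\cdot(Hs+\mathrm{id}_A)\cdot e$. A free cia on $Y$ is a cia $(C,c)$ with a morphism $\eta\colon Y\to C$ such that for every cia $(B,b)$ and morphism $f\colon Y\to B$ there is a unique $H$-algebra morphism $h\colon C\to B$ with $h\cdot\eta=f$. *)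

Set Implicit Arguments.
Unset Strict Implicit.

Record Category := {
  Obj :> Type;
  Hom : Obj -> Obj -> Type;
  idm : forall A, Hom A A;
  comp : forall A B C, Hom B C -> Hom A B -> Hom A C;
  comp_id_l : forall A B (f : Hom A B), comp (idm B) f = f;
  comp_id_r : forall A B (f : Hom A B), comp f (idm A) = f;
  comp_assoc : forall A B C D (h : Hom C D) (g : Hom B C) (f : Hom A B),
      comp h (comp g f) = comp (comp h g) f
}.
Arguments Hom {c} _ _.
Arguments idm {c} _.
Arguments comp {c A B C} _ _.

Notation "g ∘ f" := (comp g f) (at level 40, left associativity).

Record Functor (C : Category) := {
  Fobj :> C -> C;
  Fmap : forall (A B : C), Hom A B -> Hom (Fobj A) (Fobj B);
  Fmap_id : forall A : C, Fmap (idm A) = idm (Fobj A);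
  Fmap_comp : forall (A B D : C) (g : Hom B D) (f : Hom A B),
      Fmap (g ∘ f) = Fmap g ∘ Fmap f
}.
Arguments Fmap {C} f0 {A B} _.

Section Cat.
Variable C : Category.

Definition is_iso (A B : C) (f : Hom A B) : Prop :=
  exists g : Hom B A, g ∘ f = idm A /\ f ∘ g = idm B.

Definition is_mono (A B : C) (f : Hom A B) : Prop :=
  forall (X : C) (g h : Hom X A), f ∘ g = f ∘ h -> g = h.

Definition is_initial (I : C) : Prop :=
  forall X : C, exists f : Hom I X, forall g : Hom I X, g = f.

Definition countable (I : Type) : Prop :=
  exists f : I -> nat, forall x y, f x = f y -> x = y.

Definition is_coproduct (I : Type) (A : I -> C) (S : C)
  (inj : forall i, Hom (A i) S) : Prop :=
  forall (X : C) (f : forall i, Hom (A i) X),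
    exists h : Hom S X, (forall i, h ∘ inj i = f i) /\
      (forall h' : Hom S X, (forall i, h' ∘ inj i = f i) -> h' = h).
Arguments is_coproduct [I] A [S] inj.

Definition is_coproduct2 (A B S : C) (l : Hom A S) (r : Hom B S) : Prop :=
  forall (X : C) (f : Hom A X) (g : Hom B X),
    exists h : Hom S X, h ∘ l = f /\ h ∘ r = g /\
      (forall h' : Hom S X, h' ∘ l = f -> h' ∘ r = g -> h' = h).

Definition is_pullback (A B Z : C) (f : Hom A Z) (g : Hom B Z)
  (P : C) (p : Hom P A) (q : Hom P B) : Prop :=
  f ∘ p = g ∘ q /\
  forall (X : C) (x : Hom X A) (y : Hom X B), f ∘ x = g ∘ y ->
    exists u : Hom X P, p ∘ u = x /\ q ∘ u = y /\
      (forall u' : Hom X P, p ∘ u' = x -> q ∘ u' = y -> u' = u).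

Definition is_coproduct_injection (X A : C) (a : Hom X A) : Prop :=
  exists (X' : C) (b : Hom X' A), is_coproduct2 a b.

Definition disjoint_morphisms (X X' A : C) (a : Hom X A) (b : Hom X' A) : Prop :=
  exists (P : C) (p : Hom P X) (q : Hom P X'), is_initial P /\ is_pullback a b p q.

Definition has_countable_coproducts : Prop :=
  forall (I : Type), countable I -> forall A : I -> C,
    exists (S : C) (inj : forall i, Hom (A i) S), is_coproduct A inj.

Definition coproducts_universal : Prop :=
  forall (I : Type), countable I -> forall (A : I -> C) (S : C)
    (inj : forall i, Hom (A i) S), is_coproduct A inj ->
    forall (B : C) (f : Hom B S),
      (forall i, exists (P : C) (q : Hom P (A i)) (p : Hom P B),
          is_pullback (inj i) f q p) /\
      (forall (P : I -> C) (p : forall i, Hom (P i) B)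
              (q : forall i, Hom (P i) (A i)),
          (forall i, is_pullback (inj i) f (q i) (p i)) -> is_coproduct P p).

Definition coproducts_disjoint : Prop :=
  forall (I : Type), countable I -> forall (A : I -> C) (S : C)
    (inj : forall i, Hom (A i) S), is_coproduct A inj ->
    (forall i, is_mono (inj i)) /\
    (forall i j, i <> j -> disjoint_morphisms (inj i) (inj j)).

Definition coproducts_coherent : Prop :=
  forall (A : C) (An : nat -> C) (a : forall n, Hom (An n) A),
    (forall n, is_coproduct_injection (a n)) ->
    (forall n m, n <> m -> disjoint_morphisms (a n) (a m)) ->
    forall (S : C) (inj : forall n, Hom (An n) S), is_coproduct An inj ->
    forall u : Hom S A, (forall n, u ∘ inj n = a n) ->
      is_coproduct_injection u.

Definition hyper_extensive : Prop :=
  has_countable_coproducts /\ coproducts_universal /\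
  coproducts_disjoint /\ coproducts_coherent.

Variable H : Functor C.

Definition preserves_countable_coproducts : Prop :=
  forall (I : Type), countable I -> forall (A : I -> C) (S : C)
    (inj : forall i, Hom (A i) S), is_coproduct A inj ->
    is_coproduct (fun i => H (A i)) (fun i => Fmap H (inj i)).

Definition is_terminal_coalgebra (T : C) (t : Hom T (H T)) : Prop :=
  forall (X : C) (e : Hom X (H X)),
    exists h : Hom X T, t ∘ h = Fmap H h ∘ e /\
      (forall h' : Hom X T, t ∘ h' = Fmap H h' ∘ e -> h' = h).

Fixpoint Hiter (n : nat) (Y : C) : C :=
  match n with O => Y | S k => H (Hiter k Y) end.

(* s solves e : X -> P (P = HX + A with injections p1, p2), i.e.
   s = [a, id] . (Hs + id) . e ; the copairing [a . Hs, id] is the u below *)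
Definition cia_solution (A : C) (a : Hom (H A) A) (X P : C)
  (p1 : Hom (H X) P) (p2 : Hom A P) (e : Hom X P) (s : Hom X A) : Prop :=
  forall u : Hom P A, u ∘ p1 = a ∘ Fmap H s -> u ∘ p2 = idm A -> s = u ∘ e.

Definition is_cia (A : C) (a : Hom (H A) A) : Prop :=
  forall (X P : C) (p1 : Hom (H X) P) (p2 : Hom A P), is_coproduct2 p1 p2 ->
  forall e : Hom X P,
    exists s : Hom X A, cia_solution a p1 p2 e s /\
      (forall s' : Hom X A, cia_solution a p1 p2 e s' -> s' = s).

Definition is_alg_morphism (A B : C) (a : Hom (H A) A) (b : Hom (H B) B)
  (h : Hom A B) : Prop := h ∘ a = b ∘ Fmap H h.

Definition is_free_cia (Y A : C) (a : Hom (H A) A) (eta : Hom Y A) : Prop :=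
  is_cia a /\
  forall (B : C) (b : Hom (H B) B), is_cia b -> forall f : Hom Y B,
    exists h : Hom A B, (is_alg_morphism a b h /\ h ∘ eta = f) /\
      (forall h' : Hom A B, is_alg_morphism a b h' /\ h' ∘ eta = f -> h' = h).

(* h : X -> T is a coalgebra morphism for Y + H(-) from (X, e : X -> Q)
   to (T, tau : T -> D), where Q = Y + HX (q1, q2) and D = Y + HT (i1, i2):
   tau . h = (id_Y + Hh) . e ; the map id_Y + Hh is w below *)
Definition YH_coalg_morphism (Y T D : C) (i1 : Hom Y D) (i2 : Hom (H T) D)
  (tau : Hom T D) (X Q : C) (q1 : Hom Y Q) (q2 : Hom (H X) Q) (e : Hom X Q)
  (h : Hom X T) : Prop :=
  forall w : Hom Q D, w ∘ q1 = i1 -> w ∘ q2 = i2 ∘ Fmap H h -> tau ∘ h = w ∘ e.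

Definition is_terminal_YH_coalgebra (Y T D : C) (i1 : Hom Y D)
  (i2 : Hom (H T) D) (tau : Hom T D) : Prop :=
  forall (X Q : C) (q1 : Hom Y Q) (q2 : Hom (H X) Q), is_coproduct2 q1 q2 ->
  forall e : Hom X Q,
    exists h : Hom X T, YH_coalg_morphism i1 i2 tau q1 q2 e h /\
      (forall h' : Hom X T, YH_coalg_morphism i1 i2 tau q1 q2 e h' -> h' = h).

End Cat.
Arguments is_coproduct [C I] A [S] inj.
Arguments is_terminal_coalgebra [C] H [T] t.
Arguments Hiter [C] H n Y.
Arguments is_cia [C] H [A] a.
Arguments is_free_cia [C] H [Y A] a eta.
Arguments is_terminal_YH_coalgebra [C] H [Y T D] i1 i2 tau.

(* The Y + H(-)-coalgebra H*Y + nuH is terminal: given e : X -> Y + HX, the points of X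
   reaching Y after exactly n steps form summands X_n, cut out by iterated pullbacks along e,
   which are pairwise disjoint; by coherence their coproduct is a summand of X, and on its
   complement e restricts to an H-coalgebra.  A coalgebra morphism is forced on X_n into
   H^n Y by induction, and on the complement into nuH by terminality of t.  Since this
   terminal coalgebra is invertible, it is the free cia on Y: solutions of flat equations
   and algebra morphisms out of it are both obtained as coalgebra morphisms into it. *)

From Stdlib Require Import ClassicalEpsilon ProofIrrelevance PeanoNat Eqdep_dec.
Set Implicit Arguments.
Unset Strict Implicit.

Ltac assoc_norm := repeat rewrite Fmap_comp; repeat rewrite comp_assoc.

Section Coproducts.
Variable C : Category.

(* Disjointness in the strong form "every cone is initial", which needs no chosen pullback. *)
Definition disjoint (A B S : C) (a : Hom A S) (b : Hom B S) : Prop :=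
  forall Q (p : Hom Q A) (q : Hom Q B), a ∘ p = b ∘ q -> is_initial Q.

Lemma section_mono (A B : C) (s : Hom A B) (r : Hom B A) : r ∘ s = idm A -> is_mono s.
Proof.
  intros Hrs Z f g Ef.
  rewrite <- (comp_id_l f), <- (comp_id_l g), <- Hrs, <- !comp_assoc, Ef. reflexivity.
Qed.

Lemma initial_hom_unique (Q X : C) : is_initial Q -> forall f g : Hom Q X, f = g.
Proof. intros HQ f g. destruct (HQ X) as [h Hh]. rewrite (Hh f), (Hh g). reflexivity. Qed.

Lemma coproduct2_hom_ext (A B S X : C) (l : Hom A S) (r : Hom B S) : is_coproduct2 l r ->
  forall f g : Hom S X, f ∘ l = g ∘ l -> f ∘ r = g ∘ r -> f = g.
Proof.
  intros Hc f g H1 H2. destruct (Hc X (g ∘ l) (g ∘ r)) as [h [_ [_ U]]].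
  rewrite (U f H1 H2), (U g eq_refl eq_refl). reflexivity.
Qed.

Lemma coproduct_hom_ext (I : Type) (A : I -> C) (S X : C) (inj : forall i, Hom (A i) S) :
  is_coproduct A inj -> forall f g : Hom S X, (forall i, f ∘ inj i = g ∘ inj i) -> f = g.
Proof.
  intros Hc f g E. destruct (Hc X (fun i => g ∘ inj i)) as [h [_ U]].
  rewrite (U f E), (U g (fun i => eq_refl)). reflexivity.
Qed.

Lemma coproduct2_copair (A B S X : C) (l : Hom A S) (r : Hom B S) : is_coproduct2 l r ->
  forall (f : Hom A X) (g : Hom B X), { h : Hom S X | h ∘ l = f /\ h ∘ r = g }.
Proof.
  intros Hc f g. apply constructive_indefinite_description.
  destruct (Hc X f g) as [h [H1 [H2 _]]]. exists h; auto.
Qed.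

Lemma coproduct_copair (I : Type) (A : I -> C) (S X : C) (inj : forall i, Hom (A i) S) :
  is_coproduct A inj ->
  forall f : forall i, Hom (A i) X, { h : Hom S X | forall i, h ∘ inj i = f i }.
Proof.
  intros Hc f. apply constructive_indefinite_description.
  destruct (Hc X f) as [h [H1 _]]. exists h; auto.
Qed.

Lemma coproduct2_sym (A B S : C) (a : Hom A S) (b : Hom B S) :
  is_coproduct2 a b -> is_coproduct2 b a.
Proof.
  intros Hc X f g. destruct (Hc X g f) as [h [H1 [H2 U]]].
  exists h. split; [exact H2 | split; [exact H1 |]]. intros h' E1 E2. apply U; auto.
Qed.

Definition bool_fam (A B : C) : bool -> C := fun b => if b then A else B.
Definition bool_inj (A B S : C) (l : Hom A S) (r : Hom B S) :
  forall b, Hom (bool_fam A B b) S :=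
  fun b => if b as b0 return Hom (bool_fam A B b0) S then l else r.

Lemma coproduct2_bool (A B S : C) (l : Hom A S) (r : Hom B S) :
  is_coproduct2 l r -> is_coproduct (bool_fam A B) (bool_inj l r).
Proof.
  intros Hc X f. destruct (Hc X (f true) (f false)) as [h [H1 [H2 U]]].
  exists h. split.
  - intros []; assumption.
  - intros h' E. apply U; [apply (E true) | apply (E false)].
Qed.

Lemma bool_coproduct2 (F : bool -> C) (S : C) (i : forall b, Hom (F b) S) :
  is_coproduct F i -> is_coproduct2 (i true) (i false).
Proof.
  intros Hc X f g.
  destruct (Hc X (fun b => if b as b0 return Hom (F b0) X then f else g)) as [h [H1 U]].
  exists h. split; [apply (H1 true) | split; [apply (H1 false) |]].
  intros h' E1 E2. apply U. intros []; assumption.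
Qed.

Lemma countable_bool : countable bool.
Proof. exists (fun b : bool => if b then 0 else 1). intros [] []; simpl; congruence. Qed.

Lemma countable_Empty_set : countable Empty_set.
Proof. exists (fun e : Empty_set => match e with end). intros []. Qed.

Lemma countable_nat : countable nat.
Proof. exists (fun n => n). auto. Qed.

Definition empty_fam : Empty_set -> C := fun e => match e with end.

Lemma empty_coproduct_initial (A : Empty_set -> C) (S : C) (inj : forall i, Hom (A i) S) :
  is_coproduct A inj -> is_initial S.
Proof.
  intros Hc X. destruct (Hc X (fun e => match e with end)) as [h [_ U]].
  exists h. intros g. apply U. intros [].
Qed.

Lemma initial_empty_coproduct (S : C) : is_initial S ->
  is_coproduct empty_fam (fun e => match e as e0 return Hom (empty_fam e0) S with end).
Proof.
  intros HS X f. destruct (HS X) as [h Hh].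
  exists h. split; [intros [] | intros h' _; apply Hh].
Qed.

Lemma coproduct_of_initials (I : Type) (A : I -> C) (S : C) (inj : forall i, Hom (A i) S) :
  is_coproduct A inj -> (forall i, is_initial (A i)) -> is_initial S.
Proof.
  intros Hc Hi X.
  destruct (Hc X (fun i => proj1_sig (constructive_indefinite_description _ (Hi i X))))
    as [h [_ U]].
  exists h. intros g. apply U. intros i. apply initial_hom_unique; auto.
Qed.

Lemma binary_coproduct_exists : has_countable_coproducts C ->
  forall A B : C, exists S (l : Hom A S) (r : Hom B S), is_coproduct2 l r.
Proof.
  intros hc A B. destruct (hc bool countable_bool (bool_fam A B)) as [S [inj Hc]].
  exists S, (inj true), (inj false). exact (bool_coproduct2 Hc).
Qed.

End Coproducts.
Lemma coproduct_nat_injection (C : Category) : has_countable_coproducts C ->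
  forall (A : nat -> C) (S : C) (inj : forall i, Hom (A i) S),
  is_coproduct A inj -> forall n, is_coproduct_injection (inj n).
Proof.
  intros hc A S inj Hc n.
  set (K := {m : nat | m <> n}).
  assert (Kc : countable K).
  { exists (fun x : K => proj1_sig x). intros [x hx] [y hy] E; simpl in E; subst.
    f_equal; apply proof_irrelevance. }
  destruct (hc K Kc (fun m => A (proj1_sig m))) as [T [kap Hk]].
  destruct (coproduct_copair Hk (fun m => inj (proj1_sig m))) as [b Hb].
  exists T, b. intros X f g.
  set (fam := fun m => match Nat.eq_dec m n with
                       | left E => eq_rect_r (fun k => Hom (A k) X) f E
                       | right N => g ∘ kap (exist _ m N) end).
  destruct (Hc X fam) as [h [H1 U]].
  exists h. split; [| split].
  - rewrite H1. unfold fam. destruct (Nat.eq_dec n n) as [E | N].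
    + rewrite (UIP_refl_nat n E). reflexivity.
    + exfalso; auto.
  - apply (coproduct_hom_ext Hk). intros [m N]. rewrite <- comp_assoc, Hb. simpl.
    rewrite H1. unfold fam. destruct (Nat.eq_dec m n) as [E | N'].
    + exfalso; auto.
    + rewrite (proof_irrelevance _ N' N). reflexivity.
  - intros h' E1 E2. apply U. intros m. unfold fam. destruct (Nat.eq_dec m n) as [E | N].
    + subst m. exact E1.
    + rewrite <- E2, <- comp_assoc, Hb. reflexivity.
Qed.

Section HyperExtensive.
Variable C : Category.
Hypothesis hext : hyper_extensive C.

Let hcop : has_countable_coproducts C := proj1 hext.
Let huniv : coproducts_universal C := proj1 (proj2 hext).
Let hdisj : coproducts_disjoint C := proj1 (proj2 (proj2 hext)).

Lemma initial_strict (Z B : C) (f : Hom B Z) : is_initial Z -> is_initial B.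
Proof.
  intros HZ.
  destruct (huniv countable_Empty_set (initial_empty_coproduct HZ) f) as [_ Hpb].
  specialize (Hpb (@empty_fam C) (fun e => match e with end) (fun e => match e with end)
                  (fun e => match e with end)).
  exact (empty_coproduct_initial Hpb).
Qed.

Lemma coproduct2_pullbacks (A B S Z : C) (a : Hom A S) (b : Hom B S) (f : Hom Z S) :
  is_coproduct2 a b ->
  exists (P1 : C) (p1 : Hom P1 Z) (f1 : Hom P1 A) (P2 : C) (p2 : Hom P2 Z) (f2 : Hom P2 B),
    is_pullback a f f1 p1 /\ is_pullback b f f2 p2 /\ is_coproduct2 p1 p2.
Proof.
  intros Hc. destruct (huniv countable_bool (coproduct2_bool Hc) f) as [Ex Co].
  destruct (Ex true) as [P1 [f1 [p1 Pb1]]]. destruct (Ex false) as [P2 [f2 [p2 Pb2]]].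
  exists P1, p1, f1, P2, p2, f2. split; [exact Pb1 | split; [exact Pb2 |]].
  apply (bool_coproduct2 (F := bool_fam P1 P2) (i := bool_inj p1 p2)).
  apply (Co _ _ (fun b => if b as b0 return Hom (bool_fam P1 P2 b0) (bool_fam A B b0)
                          then f1 else f2)).
  intros []; assumption.
Qed.

Lemma coproduct2_disjoint (A B S : C) (a : Hom A S) (b : Hom B S) :
  is_coproduct2 a b -> disjoint a b.
Proof.
  intros Hc Q p q E.
  destruct (proj2 (hdisj countable_bool (coproduct2_bool Hc)) true false ltac:(discriminate))
    as [P [p0 [q0 [HP [_ U]]]]].
  destruct (U Q p q E) as [v _]. exact (initial_strict v HP).
Qed.

Lemma coproduct2_mono_r (A B S : C) (a : Hom A S) (b : Hom B S) :
  is_coproduct2 a b -> is_mono b.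
Proof. intros Hc. exact (proj1 (hdisj countable_bool (coproduct2_bool Hc)) false). Qed.

Lemma coproduct_pullback_family (I : Type) (A : I -> C) (S Z : C)
  (inj : forall i, Hom (A i) S) (f : Hom Z S) : countable I -> is_coproduct A inj ->
  exists (P : I -> C) (p : forall i, Hom (P i) Z) (q : forall i, Hom (P i) (A i)),
    (forall i, inj i ∘ q i = f ∘ p i) /\ is_coproduct P p.
Proof.
  intros Ic Hc. destruct (huniv Ic Hc f) as [Ex Co].
  assert (X : forall i,
             {P : C & {q : Hom P (A i) & {p : Hom P Z | is_pullback (inj i) f q p}}}).
  { intros i. destruct (constructive_indefinite_description _ (Ex i)) as [P HP].
    destruct (constructive_indefinite_description _ HP) as [q Hq].
    destruct (constructive_indefinite_description _ Hq) as [p Hp].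
    exact (existT _ P (existT _ q (exist _ p Hp))). }
  exists (fun i => projT1 (X i)), (fun i => proj1_sig (projT2 (projT2 (X i)))),
    (fun i => projT1 (projT2 (X i))).
  split.
  - intros i. exact (proj1 (proj2_sig (projT2 (projT2 (X i))))).
  - apply (Co _ _ (fun i => projT1 (projT2 (X i)))).
    intros i. exact (proj2_sig (projT2 (projT2 (X i)))).
Qed.

Lemma disjoint_from_summands (I : Type) (A : I -> C) (S Z W : C)
  (inj : forall i, Hom (A i) S) (v : Hom S W) (f : Hom Z W) :
  countable I -> is_coproduct A inj -> (forall i, disjoint f (v ∘ inj i)) -> disjoint f v.
Proof.
  intros Ic Hc Hd Q p q Epq.
  destruct (coproduct_pullback_family q Ic Hc) as [P [pp [qq [Eq HP]]]].
  apply (coproduct_of_initials HP). intros i.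
  apply (Hd i _ (p ∘ pp i) (qq i)).
  rewrite comp_assoc, Epq, <- !comp_assoc, Eq. reflexivity.
Qed.

Lemma factor_through_complement (A B S Z : C) (a : Hom A S) (b : Hom B S) (f : Hom Z S) :
  is_coproduct2 a b -> disjoint f a -> exists f' : Hom Z B, f = b ∘ f'.
Proof.
  intros Hc Hd.
  destruct (coproduct2_pullbacks f Hc)
    as [P1 [p1 [f1 [P2 [p2 [f2 [[E1 _] [[E2 _] Hp]]]]]]]].
  assert (I1 : is_initial P1) by (apply (Hd P1 p1 f1); symmetry; exact E1).
  destruct (I1 B) as [z _].
  destruct (coproduct2_copair Hp z f2) as [f' [F1 F2]].
  exists f'. apply (coproduct2_hom_ext Hp).
  - apply initial_hom_unique; exact I1.
  - rewrite <- comp_assoc, F2. symmetry; exact E2.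
Qed.

Lemma coproduct_injection_comp (A1 A S : C) (a : Hom A1 A) (l : Hom A S) :
  is_coproduct_injection a -> is_coproduct_injection l -> is_coproduct_injection (l ∘ a).
Proof.
  intros [A2 [a2 Ha]] [B [r Hl]].
  destruct (binary_coproduct_exists hcop A2 B) as [K [k1 [k2 Hk]]].
  destruct (coproduct2_copair Hk (l ∘ a2) r) as [m [M1 M2]].
  exists K, m. intros X f g.
  destruct (coproduct2_copair Ha f (g ∘ k1)) as [u [U1 U2]].
  destruct (coproduct2_copair Hl u (g ∘ k2)) as [h [H1 H2]].
  exists h. split; [| split].
  - rewrite comp_assoc, H1. exact U1.
  - apply (coproduct2_hom_ext Hk).
    + rewrite <- comp_assoc, M1, comp_assoc, H1. exact U2.
    + rewrite <- comp_assoc, M2. exact H2.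
  - intros h' E1 E2. apply (coproduct2_hom_ext Hl).
    + rewrite H1. apply (coproduct2_hom_ext Ha).
      * rewrite <- comp_assoc, E1. symmetry; exact U1.
      * rewrite <- comp_assoc, U2, <- E2, <- comp_assoc, M1. reflexivity.
    + rewrite H2, <- E2, <- comp_assoc, M2. reflexivity.
Qed.

Lemma coproduct_injection_pullback (A S Z : C) (a : Hom A S) (f : Hom Z S) :
  is_coproduct_injection a ->
  exists (P : C) (p : Hom P Z) (q : Hom P A), is_pullback a f q p /\ is_coproduct_injection p.
Proof.
  intros [B [b Hc]].
  destruct (coproduct2_pullbacks f Hc) as [P1 [p1 [f1 [P2 [p2 [f2 [Pb1 [_ Hp]]]]]]]].
  exists P1, p1, f1. split; [exact Pb1 |]. exists P2, p2. exact Hp.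
Qed.

Lemma disjoint_disjoint_morphisms (A B S : C) (a : Hom A S) (b : Hom B S) :
  is_coproduct_injection a -> disjoint a b -> disjoint_morphisms a b.
Proof.
  intros Ha Hd. destruct (coproduct_injection_pullback b Ha) as [P [p [q [Pb _]]]].
  exists P, q, p. split; [exact (Hd P q p (proj1 Pb)) | exact Pb].
Qed.

Variable H : Functor C.
Hypothesis hpres : preserves_countable_coproducts H.

Lemma Fmap_coproduct2 (A B S : C) (a : Hom A S) (b : Hom B S) :
  is_coproduct2 a b -> is_coproduct2 (Fmap H a) (Fmap H b).
Proof. intros Hc. exact (bool_coproduct2 (hpres countable_bool (coproduct2_bool Hc))). Qed.

Lemma Fmap_coproduct_injection (A S : C) (a : Hom A S) :
  is_coproduct_injection a -> is_coproduct_injection (Fmap H a).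
Proof. intros [B [b Hc]]. exists (H B), (Fmap H b). exact (Fmap_coproduct2 Hc). Qed.

Lemma Fmap_disjoint (A S Z : C) (a : Hom A S) (f : Hom Z S) :
  is_coproduct_injection a -> disjoint f a -> disjoint (Fmap H f) (Fmap H a).
Proof.
  intros [B [b Hc]] Hd Q p q E.
  destruct (factor_through_complement Hc Hd) as [f' Ef]. subst f.
  rewrite Fmap_comp, <- comp_assoc in E.
  apply (coproduct2_disjoint (Fmap_coproduct2 Hc) (p := q) (q := Fmap H f' ∘ p)).
  symmetry; exact E.
Qed.

End HyperExtensive.

(* A cia solution of e : X -> HX + T is the X-component of the coalgebra morphism out of
   X + T -> Y + H(X + T) that follows e on X (mapping HX into H(X + T)) and c on T. *)
Section TerminalCoalgebraFreeCia.
Variables (C : Category) (H : Functor C).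
Hypothesis hcop : has_countable_coproducts C.
Variables (Y T D : C) (i1 : Hom Y D) (i2 : Hom (H T) D).
Hypothesis hD : is_coproduct2 i1 i2.
Variable c : Hom T D.
Hypothesis hterm : is_terminal_YH_coalgebra H i1 i2 c.
Variables (d : Hom D T) (a : Hom (H T) T) (eta : Hom Y T).
Hypotheses (hdc : d ∘ c = idm T) (hcd : c ∘ d = idm D).
Hypotheses (hca : c ∘ a = i2) (hceta : c ∘ eta = i1).

Lemma d_i1 : d ∘ i1 = eta.
Proof. rewrite <- hceta, comp_assoc, hdc, comp_id_l. reflexivity. Qed.

Lemma d_i2 : d ∘ i2 = a.
Proof. rewrite <- hca, comp_assoc, hdc, comp_id_l. reflexivity. Qed.

Lemma YH_coalg_morphism_unique (X Q : C) (q1 : Hom Y Q) (q2 : Hom (H X) Q)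
  (e : Hom X Q) (h h' : Hom X T) : is_coproduct2 q1 q2 ->
  YH_coalg_morphism i1 i2 c q1 q2 e h -> YH_coalg_morphism i1 i2 c q1 q2 e h' -> h = h'.
Proof.
  intros hQ Hh Hh'. destruct (hterm hQ e) as [h0 [_ U]]. rewrite (U h Hh), (U h' Hh').
  reflexivity.
Qed.

Lemma YH_coalg_endo_id (h : Hom T T) : YH_coalg_morphism i1 i2 c i1 i2 c h -> h = idm T.
Proof.
  intros Hh. apply (YH_coalg_morphism_unique hD Hh). intros w W1 W2.
  rewrite Fmap_id, comp_id_r in W2.
  assert (w = idm D) as -> by (apply (coproduct2_hom_ext hD); rewrite comp_id_l; assumption).
  rewrite comp_id_l, comp_id_r. reflexivity.
Qed.

Section Solutions.
Variables (X P : C) (p1 : Hom (H X) P) (p2 : Hom T P).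
Hypothesis hP : is_coproduct2 p1 p2.
Variable e : Hom X P.
Variables (K : C) (kl : Hom X K) (kr : Hom T K).
Hypothesis hK : is_coproduct2 kl kr.
Variables (Q : C) (q1 : Hom Y Q) (q2 : Hom (H K) Q).
Hypothesis hQ : is_coproduct2 q1 q2.

Definition v_kr : Hom D Q := proj1_sig (coproduct2_copair hD q1 (q2 ∘ Fmap H kr)).
Lemma v_kr_i1 : v_kr ∘ i1 = q1.
Proof. exact (proj1 (proj2_sig (coproduct2_copair hD q1 (q2 ∘ Fmap H kr)))). Qed.
Lemma v_kr_i2 : v_kr ∘ i2 = q2 ∘ Fmap H kr.
Proof. exact (proj2 (proj2_sig (coproduct2_copair hD q1 (q2 ∘ Fmap H kr)))). Qed.

Definition z_kl : Hom P Q := proj1_sig (coproduct2_copair hP (q2 ∘ Fmap H kl) (v_kr ∘ c)).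
Lemma z_kl_p1 : z_kl ∘ p1 = q2 ∘ Fmap H kl.
Proof. exact (proj1 (proj2_sig (coproduct2_copair hP (q2 ∘ Fmap H kl) (v_kr ∘ c)))). Qed.
Lemma z_kl_p2 : z_kl ∘ p2 = v_kr ∘ c.
Proof. exact (proj2 (proj2_sig (coproduct2_copair hP (q2 ∘ Fmap H kl) (v_kr ∘ c)))). Qed.

Definition eps : Hom K Q := proj1_sig (coproduct2_copair hK (z_kl ∘ e) (v_kr ∘ c)).
Lemma eps_kl : eps ∘ kl = z_kl ∘ e.
Proof. exact (proj1 (proj2_sig (coproduct2_copair hK (z_kl ∘ e) (v_kr ∘ c)))). Qed.
Lemma eps_kr : eps ∘ kr = v_kr ∘ c.
Proof. exact (proj2 (proj2_sig (coproduct2_copair hK (z_kl ∘ e) (v_kr ∘ c)))). Qed.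

Lemma w_v_kr (h : Hom K T) (w : Hom Q D) : h ∘ kr = idm T ->
  w ∘ q1 = i1 -> w ∘ q2 = i2 ∘ Fmap H h -> w ∘ v_kr = idm D.
Proof.
  intros Hr W1 W2. apply (coproduct2_hom_ext hD).
  - rewrite <- comp_assoc, v_kr_i1, W1, comp_id_l. reflexivity.
  - rewrite <- comp_assoc, v_kr_i2, comp_assoc, W2, <- comp_assoc, <- Fmap_comp, Hr,
      Fmap_id, comp_id_r, comp_id_l. reflexivity.
Qed.

Lemma coalg_morphism_kr_id (h : Hom K T) :
  YH_coalg_morphism i1 i2 c q1 q2 eps h -> h ∘ kr = idm T.
Proof.
  intros Hh. apply YH_coalg_endo_id. intros w1 X1 X2.
  destruct (coproduct2_copair hQ i1 (i2 ∘ Fmap H h)) as [w [W1 W2]].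
  assert (w1 = w ∘ v_kr) as ->.
  { apply (coproduct2_hom_ext hD).
    - rewrite X1, <- comp_assoc, v_kr_i1, W1. reflexivity.
    - rewrite X2, <- comp_assoc, v_kr_i2, comp_assoc, W2. assoc_norm. reflexivity. }
  rewrite !comp_assoc, (Hh w W1 W2), <- comp_assoc, eps_kr, !comp_assoc. reflexivity.
Qed.

Lemma coalg_morphism_iff_solution (h : Hom K T) : h ∘ kr = idm T ->
  YH_coalg_morphism i1 i2 c q1 q2 eps h <-> cia_solution a p1 p2 e (h ∘ kl).
Proof.
  intros Hr.
  destruct (coproduct2_copair hQ i1 (i2 ∘ Fmap H h)) as [w [W1 W2]].
  destruct (coproduct2_copair hP (a ∘ Fmap H (h ∘ kl)) (idm T)) as [u [U1 U2]].
  assert (Wz : w ∘ z_kl = c ∘ u).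
  { apply (coproduct2_hom_ext hP).
    - rewrite <- !comp_assoc, z_kl_p1, U1, comp_assoc, W2, comp_assoc, hca. assoc_norm.
      reflexivity.
    - rewrite <- !comp_assoc, z_kl_p2, U2, comp_assoc, (w_v_kr Hr W1 W2), comp_id_l,
        comp_id_r. reflexivity. }
  split.
  - intros Hh u' U1' U2'.
    assert (u' = u) as -> by (apply (coproduct2_hom_ext hP); congruence).
    apply (section_mono hdc).
    rewrite comp_assoc, (Hh w W1 W2), <- comp_assoc, eps_kl, comp_assoc, Wz.
    symmetry; apply comp_assoc.
  - intros Hs w' W1' W2'.
    assert (w' = w) as -> by (apply (coproduct2_hom_ext hQ); congruence).
    apply (coproduct2_hom_ext hK).
    + rewrite <- !comp_assoc, eps_kl, (Hs u U1 U2), !comp_assoc, Wz. reflexivity.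
    + rewrite <- !comp_assoc, Hr, eps_kr, comp_assoc, (w_v_kr Hr W1 W2), comp_id_l,
        comp_id_r. reflexivity.
Qed.

Lemma cia_solution_unique_exists :
  exists s : Hom X T, cia_solution a p1 p2 e s /\
    (forall s' : Hom X T, cia_solution a p1 p2 e s' -> s' = s).
Proof.
  destruct (hterm hQ eps) as [h [Hh _]].
  pose proof (coalg_morphism_kr_id Hh) as Hr.
  exists (h ∘ kl). split; [exact (proj1 (coalg_morphism_iff_solution Hr) Hh) |].
  intros s' Hs'.
  destruct (coproduct2_copair hK s' (idm T)) as [h' [H1 H2]].
  rewrite <- H1 in Hs'. rewrite <- H1.
  apply (proj2 (coalg_morphism_iff_solution H2)) in Hs'.
  rewrite (YH_coalg_morphism_unique hQ Hs' Hh). reflexivity.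
Qed.

End Solutions.

Lemma terminal_YH_coalgebra_cia : is_cia H a.
Proof.
  intros X P p1 p2 hP e.
  destruct (binary_coproduct_exists hcop X T) as [K [kl [kr hK]]].
  destruct (binary_coproduct_exists hcop Y (H K)) as [Q [q1 [q2 hQ]]].
  exact (cia_solution_unique_exists hP e hK hQ).
Qed.

(* For a cia (B, b), algebra morphisms h with h . eta = f are exactly the solutions of
   (f + id) . c : T -> Y + HT -> HT + B. *)
Lemma terminal_YH_coalgebra_free_cia : is_free_cia H a eta.
Proof.
  split; [exact terminal_YH_coalgebra_cia |].
  intros B b hb f.
  destruct (binary_coproduct_exists hcop (H T) B) as [P [p1 [p2 hP]]].
  destruct (coproduct2_copair hD (p2 ∘ f) p1) as [v [V1 V2]].
  destruct (hb T P p1 p2 hP (v ∘ c)) as [s [Hs Us]].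
  destruct (coproduct2_copair hP (b ∘ Fmap H s) (idm B)) as [u [U1 U2]].
  assert (Hsd : s ∘ d = u ∘ v).
  { rewrite (Hs u U1 U2), <- !comp_assoc, hcd, comp_id_r. reflexivity. }
  exists s. split; [split |].
  - unfold is_alg_morphism.
    rewrite <- d_i2, comp_assoc, Hsd, <- comp_assoc, V2, U1. reflexivity.
  - rewrite <- d_i1, comp_assoc, Hsd, <- comp_assoc, V1, comp_assoc, U2, comp_id_l.
    reflexivity.
  - intros g [Hg1 Hg2]. apply Us. intros u' U1' U2'.
    rewrite <- (comp_id_r g), <- hdc, !comp_assoc. f_equal.
    apply (coproduct2_hom_ext hD).
    + rewrite <- comp_assoc, d_i1, Hg2, <- comp_assoc, V1, comp_assoc, U2', comp_id_l.
      reflexivity.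
    + rewrite <- comp_assoc, d_i2, Hg1, <- comp_assoc, V2, U1'. reflexivity.
Qed.

End TerminalCoalgebraFreeCia.

Section Finality.
Variables (C : Category) (H : Functor C).
Hypothesis hext : hyper_extensive C.
Hypothesis hpres : preserves_countable_coproducts H.
Variables (nuH : C) (t : Hom nuH (H nuH)).
Hypothesis ht : is_terminal_coalgebra H t.
Variables (Y HsY : C) (j : forall n, Hom (Hiter H n Y) HsY).
Hypothesis hHsY : is_coproduct (fun n => Hiter H n Y) j.
Variables (CY : C) (inl : Hom HsY CY) (inr : Hom nuH CY).
Hypothesis hCY : is_coproduct2 inl inr.
Variables (D : C) (i1 : Hom Y D) (i2 : Hom (H CY) D).
Hypothesis hD : is_coproduct2 i1 i2.
Variable c : Hom CY D.
Hypothesis hc_j0 : c ∘ inl ∘ j 0 = i1.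
Hypothesis hc_jS : forall n, c ∘ inl ∘ j (S n) = i2 ∘ Fmap H (inl ∘ j n).
Hypothesis hc_inr : c ∘ inr = i2 ∘ Fmap H inr ∘ t.
Hypothesis hc_mono : is_mono c.

Lemma inl_j_injection n : is_coproduct_injection (inl ∘ j n).
Proof.
  apply (coproduct_injection_comp hext (coproduct_nat_injection (proj1 hext) hHsY n)).
  exists nuH, inr. exact hCY.
Qed.

(* By induction on n such a map is disjoint from every summand H^n Y, hence misses H*Y. *)
Lemma H_coalg_map_factors_inr (Z : C) (g : Hom Z (H Z)) (f : Hom Z CY) :
  c ∘ f = i2 ∘ Fmap H f ∘ g ->
  exists b : Hom Z nuH, f = inr ∘ b /\ t ∘ b = Fmap H b ∘ g.
Proof.
  intros Hf.
  assert (Dn : forall n, disjoint f (inl ∘ j n)).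
  { induction n as [| n IH]; intros W p q Epq.
    - apply (coproduct2_disjoint hext hD (p := q) (q := Fmap H f ∘ g ∘ p)).
      transitivity (c ∘ (f ∘ p)).
      + rewrite Epq, !comp_assoc, hc_j0. reflexivity.
      + rewrite comp_assoc, Hf, !comp_assoc. reflexivity.
    - assert (E2 : Fmap H f ∘ (g ∘ p) = Fmap H (inl ∘ j n) ∘ q).
      { apply (coproduct2_mono_r hext hD).
        rewrite !comp_assoc, <- Hf, <- hc_jS, <- (comp_assoc c f p), Epq, !comp_assoc.
        reflexivity. }
      exact (Fmap_disjoint hext hpres (inl_j_injection n) IH E2). }
  destruct (factor_through_complement hext hCY
              (disjoint_from_summands hext countable_nat hHsY Dn)) as [b Eb].
  exists b. split; [exact Eb |].
  apply (coproduct2_mono_r hext (Fmap_coproduct2 hpres hCY)).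
  apply (coproduct2_mono_r hext hD).
  rewrite !comp_assoc, <- hc_inr, <- comp_assoc, <- Eb, Hf, Eb. assoc_norm. reflexivity.
Qed.

Section Coalgebra.
Variables (X Q : C) (q1 : Hom Y Q) (q2 : Hom (H X) Q).
Hypothesis hQ : is_coproduct2 q1 q2.
Variable e : Hom X Q.

Record level := mkLevel
  { level_obj : C;
    level_incl : Hom level_obj X;
    level_injection : is_coproduct_injection level_incl }.

Lemma choose_injection_pullback (A S Z : C) (a : Hom A S) (ha : is_coproduct_injection a)
  (f : Hom Z S) :
  {P : C & {p : Hom P Z & {q : Hom P A | is_pullback a f q p /\ is_coproduct_injection p}}}.
Proof.
  destruct (constructive_indefinite_description _
              (coproduct_injection_pullback hext f ha)) as [P HP].
  destruct (constructive_indefinite_description _ HP) as [p Hp].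
  destruct (constructive_indefinite_description _ Hp) as [q Hq].
  exact (existT _ P (existT _ p (exist _ q Hq))).
Qed.

Lemma q1_injection : is_coproduct_injection q1.
Proof. exists (H X), q2. exact hQ. Qed.

Lemma q2_Fmap_injection (l : level) : is_coproduct_injection (q2 ∘ Fmap H (level_incl l)).
Proof.
  apply (coproduct_injection_comp hext (Fmap_coproduct_injection hpres (level_injection l))).
  exists Y, q1. exact (coproduct2_sym hQ).
Qed.

Definition pullback0 := choose_injection_pullback q1_injection e.
Definition pullbackS (l : level) := choose_injection_pullback (q2_Fmap_injection l) e.

Fixpoint level_n (n : nat) : level :=
  match n with
  | O => mkLevel (proj2 (proj2_sig (projT2 (projT2 pullback0))))
  | S n' => mkLevel (proj2 (proj2_sig (projT2 (projT2 (pullbackS (level_n n'))))))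
  end.

Definition Xn n := level_obj (level_n n).
Definition xn n : Hom (Xn n) X := level_incl (level_n n).
Definition y0 : Hom (Xn 0) Y := proj1_sig (projT2 (projT2 pullback0)).
Definition gn n : Hom (Xn (S n)) (H (Xn n)) :=
  proj1_sig (projT2 (projT2 (pullbackS (level_n n)))).

Lemma pullback_x0 : is_pullback q1 e y0 (xn 0).
Proof. exact (proj1 (proj2_sig (projT2 (projT2 pullback0)))). Qed.

Lemma pullback_xS n : is_pullback (q2 ∘ Fmap H (xn n)) e (gn n) (xn (S n)).
Proof. exact (proj1 (proj2_sig (projT2 (projT2 (pullbackS (level_n n)))))). Qed.

Lemma xn_injection n : is_coproduct_injection (xn n).
Proof. exact (level_injection (level_n n)). Qed.

Lemma e_x0 : e ∘ xn 0 = q1 ∘ y0.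
Proof. symmetry. exact (proj1 pullback_x0). Qed.

Lemma e_xS n : e ∘ xn (S n) = q2 ∘ Fmap H (xn n) ∘ gn n.
Proof. symmetry. exact (proj1 (pullback_xS n)). Qed.

Lemma xn_disjoint : forall n p, n <> p -> disjoint (xn n) (xn p).
Proof.
  induction n as [| n IH]; intros [| p] Hnp Z a b Eab.
  - congruence.
  - apply (coproduct2_disjoint hext hQ (p := y0 ∘ a) (q := Fmap H (xn p) ∘ gn p ∘ b)).
    rewrite !comp_assoc, <- e_x0, <- (comp_assoc e), Eab, comp_assoc, e_xS. reflexivity.
  - apply (coproduct2_disjoint hext hQ (p := y0 ∘ b) (q := Fmap H (xn n) ∘ gn n ∘ a)).
    rewrite !comp_assoc, <- e_x0, <- (comp_assoc e), <- Eab, comp_assoc, e_xS. reflexivity.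
  - assert (E2 : Fmap H (xn n) ∘ (gn n ∘ a) = Fmap H (xn p) ∘ (gn p ∘ b)).
    { apply (coproduct2_mono_r hext hQ).
      rewrite !comp_assoc, <- !e_xS, <- !comp_assoc, Eab. reflexivity. }
    exact (Fmap_disjoint hext hpres (xn_injection p) (IH p ltac:(congruence)) E2).
Qed.

Lemma levels_coproduct : {S : C & {inj : forall n, Hom (Xn n) S | is_coproduct Xn inj}}.
Proof.
  destruct (constructive_indefinite_description _ (proj1 hext nat countable_nat Xn)) as [S HS].
  destruct (constructive_indefinite_description _ HS) as [inj Hi].
  exact (existT _ S (exist _ inj Hi)).
Qed.

Definition Xfin := projT1 levels_coproduct.
Definition xfin_in : forall n, Hom (Xn n) Xfin := proj1_sig (projT2 levels_coproduct).
Lemma Xfin_coproduct : is_coproduct Xn xfin_in.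
Proof. exact (proj2_sig (projT2 levels_coproduct)). Qed.

Definition xfin : Hom Xfin X := proj1_sig (coproduct_copair Xfin_coproduct xn).
Lemma xfin_in_xn n : xfin ∘ xfin_in n = xn n.
Proof. exact (proj2_sig (coproduct_copair Xfin_coproduct xn) n). Qed.

Lemma xfin_injection : is_coproduct_injection xfin.
Proof.
  apply (proj2 (proj2 (proj2 hext)) X Xn xn xn_injection) with (inj := xfin_in).
  - intros n p Hnp. exact (disjoint_disjoint_morphisms hext (xn_injection n) (xn_disjoint Hnp)).
  - exact Xfin_coproduct.
  - exact xfin_in_xn.
Qed.

Lemma xfin_complement : {Xinf : C & {xinf : Hom Xinf X | is_coproduct2 xfin xinf}}.
Proof.
  destruct (constructive_indefinite_description _ xfin_injection) as [S HS].
  destruct (constructive_indefinite_description _ HS) as [xinf Hi].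
  exact (existT _ S (exist _ xinf Hi)).
Qed.

Definition Xinf := projT1 xfin_complement.
Definition xinf : Hom Xinf X := proj1_sig (projT2 xfin_complement).
Lemma X_coproduct : is_coproduct2 xfin xinf.
Proof. exact (proj2_sig (projT2 xfin_complement)). Qed.

Lemma xinf_meets_no_level (Z : C) (p : Hom Z Xinf) n (w : Hom Z (Xn n)) :
  xn n ∘ w = xinf ∘ p -> is_initial Z.
Proof.
  intros Ew. apply (coproduct2_disjoint hext X_coproduct (p := xfin_in n ∘ w) (q := p)).
  rewrite comp_assoc, xfin_in_xn. exact Ew.
Qed.

Lemma e_xinf_factors : exists g : Hom Xinf (H Xinf), e ∘ xinf = q2 ∘ Fmap H xinf ∘ g.
Proof.
  assert (Hdisj1 : disjoint (e ∘ xinf) q1).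
  { intros Z p q Epq.
    destruct (proj2 pullback_x0 Z q (xinf ∘ p)) as [w [_ [W _]]].
    - rewrite comp_assoc. symmetry; exact Epq.
    - exact (xinf_meets_no_level W). }
  destruct (factor_through_complement hext hQ Hdisj1) as [gam Egam].
  assert (Hdisj2 : forall n, disjoint gam (Fmap H xfin ∘ Fmap H (xfin_in n))).
  { intros n Z p q Epq.
    rewrite <- Fmap_comp, xfin_in_xn in Epq.
    destruct (proj2 (pullback_xS n) Z q (xinf ∘ p)) as [w [_ [W _]]].
    - rewrite <- comp_assoc, <- Epq, comp_assoc, comp_assoc, Egam. reflexivity.
    - exact (xinf_meets_no_level W). }
  destruct (factor_through_complement hext (Fmap_coproduct2 hpres X_coproduct)
              (disjoint_from_summands hext countable_nat (hpres countable_nat Xfin_coproduct)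
                 Hdisj2)) as [g Eg].
  exists g. rewrite Egam, Eg. apply comp_assoc.
Qed.

Definition ginf : Hom Xinf (H Xinf) :=
  proj1_sig (constructive_indefinite_description _ e_xinf_factors).
Lemma e_xinf : e ∘ xinf = q2 ∘ Fmap H xinf ∘ ginf.
Proof. exact (proj2_sig (constructive_indefinite_description _ e_xinf_factors)). Qed.

Definition binf : Hom Xinf nuH := proj1_sig (constructive_indefinite_description _ (ht ginf)).
Lemma t_binf : t ∘ binf = Fmap H binf ∘ ginf.
Proof. exact (proj1 (proj2_sig (constructive_indefinite_description _ (ht ginf)))). Qed.
Lemma binf_unique (b : Hom Xinf nuH) : t ∘ b = Fmap H b ∘ ginf -> b = binf.
Proof. exact (proj2 (proj2_sig (constructive_indefinite_description _ (ht ginf))) b). Qed.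

Fixpoint an n : Hom (Xn n) (Hiter H n Y) :=
  match n with O => y0 | S n' => Fmap H (an n') ∘ gn n' end.

Definition hfin : Hom Xfin HsY :=
  proj1_sig (coproduct_copair Xfin_coproduct (fun n => j n ∘ an n)).
Lemma hfin_in n : hfin ∘ xfin_in n = j n ∘ an n.
Proof. exact (proj2_sig (coproduct_copair Xfin_coproduct (fun n => j n ∘ an n)) n). Qed.

Definition hsol : Hom X CY :=
  proj1_sig (coproduct2_copair X_coproduct (inl ∘ hfin) (inr ∘ binf)).
Lemma hsol_xfin : hsol ∘ xfin = inl ∘ hfin.
Proof. exact (proj1 (proj2_sig (coproduct2_copair X_coproduct (inl ∘ hfin) (inr ∘ binf)))). Qed.
Lemma hsol_xinf : hsol ∘ xinf = inr ∘ binf.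
Proof. exact (proj2 (proj2_sig (coproduct2_copair X_coproduct (inl ∘ hfin) (inr ∘ binf)))). Qed.
Lemma hsol_xn n : hsol ∘ xn n = inl ∘ j n ∘ an n.
Proof. rewrite <- xfin_in_xn, comp_assoc, hsol_xfin, <- comp_assoc, hfin_in. apply comp_assoc. Qed.

Lemma coalg_eq_on_xn0 (w : Hom Q D) : w ∘ q1 = i1 ->
  w ∘ e ∘ xn 0 = c ∘ inl ∘ j 0 ∘ an 0.
Proof. intros W1. rewrite <- comp_assoc, e_x0, comp_assoc, W1, hc_j0. reflexivity. Qed.

Lemma coalg_eq_on_xnS (h : Hom X CY) (w : Hom Q D) n : w ∘ q2 = i2 ∘ Fmap H h ->
  h ∘ xn n = inl ∘ j n ∘ an n -> w ∘ e ∘ xn (S n) = c ∘ inl ∘ j (S n) ∘ an (S n).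
Proof.
  intros W2 Hn.
  rewrite <- comp_assoc, e_xS, !comp_assoc, W2, <- (comp_assoc i2), <- Fmap_comp, Hn, hc_jS.
  simpl an. assoc_norm. reflexivity.
Qed.

Lemma hsol_coalg_morphism : YH_coalg_morphism i1 i2 c q1 q2 e hsol.
Proof.
  intros w W1 W2. apply (coproduct2_hom_ext X_coproduct).
  - apply (coproduct_hom_ext Xfin_coproduct). intros n.
    rewrite <- !comp_assoc, !xfin_in_xn, hsol_xn, !comp_assoc.
    destruct n as [| n].
    + symmetry. exact (coalg_eq_on_xn0 W1).
    + symmetry. exact (coalg_eq_on_xnS W2 (hsol_xn n)).
  - rewrite <- (comp_assoc c hsol), hsol_xinf, comp_assoc, hc_inr, <- (comp_assoc _ t binf),
      t_binf, <- (comp_assoc w e), e_xinf, !comp_assoc, W2,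
      <- (comp_assoc i2 (Fmap H hsol) (Fmap H xinf)), <- Fmap_comp, hsol_xinf.
    assoc_norm. reflexivity.
Qed.

Lemma coalg_morphism_on_levels (h : Hom X CY) : YH_coalg_morphism i1 i2 c q1 q2 e h ->
  forall n, h ∘ xn n = inl ∘ j n ∘ an n.
Proof.
  intros Hh.
  destruct (coproduct2_copair hQ i1 (i2 ∘ Fmap H h)) as [w [W1 W2]].
  induction n as [| n IH]; apply hc_mono; rewrite comp_assoc, (Hh w W1 W2), !comp_assoc.
  - exact (coalg_eq_on_xn0 W1).
  - exact (coalg_eq_on_xnS W2 IH).
Qed.

Lemma coalg_morphism_eq_hsol (h : Hom X CY) : YH_coalg_morphism i1 i2 c q1 q2 e h -> h = hsol.
Proof.
  intros Hh.
  destruct (coproduct2_copair hQ i1 (i2 ∘ Fmap H h)) as [w [W1 W2]].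
  assert (Hinf : c ∘ (h ∘ xinf) = i2 ∘ Fmap H (h ∘ xinf) ∘ ginf).
  { rewrite comp_assoc, (Hh w W1 W2), <- comp_assoc, e_xinf, !comp_assoc, W2.
    assoc_norm. reflexivity. }
  destruct (H_coalg_map_factors_inr Hinf) as [b [Eb Hb]].
  apply binf_unique in Hb. subst b.
  apply (coproduct2_hom_ext X_coproduct).
  - apply (coproduct_hom_ext Xfin_coproduct). intros n.
    rewrite <- !comp_assoc, !xfin_in_xn, hsol_xn. exact (coalg_morphism_on_levels Hh n).
  - rewrite Eb, hsol_xinf. reflexivity.
Qed.

End Coalgebra.

Lemma CY_terminal : is_terminal_YH_coalgebra H i1 i2 c.
Proof.
  intros X Q q1 q2 hQ e. exists (hsol hQ e). split.
  - apply hsol_coalg_morphism.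
  - apply coalg_morphism_eq_hsol.
Qed.

End Finality.

Section Structure.
Variables (C : Category) (H : Functor C).
Hypothesis hpres : preserves_countable_coproducts H.
Variables (nuH : C) (t : Hom nuH (H nuH)) (tinv : Hom (H nuH) nuH).
Hypothesis htinv : tinv ∘ t = idm nuH /\ t ∘ tinv = idm (H nuH).
Variables (Y HsY : C) (j : forall n, Hom (Hiter H n Y) HsY).
Hypothesis hHsY : is_coproduct (fun n => Hiter H n Y) j.
Variable phi : Hom (H HsY) HsY.
Hypothesis hphi : forall n, phi ∘ Fmap H (j n) = j (S n).
Variables (CY : C) (inl : Hom HsY CY) (inr : Hom nuH CY).
Hypothesis hCY : is_coproduct2 inl inr.
Variable alg : Hom (H CY) CY.
Hypotheses (halg1 : alg ∘ Fmap H inl = inl ∘ phi) (halg2 : alg ∘ Fmap H inr = inr ∘ tinv).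
Variables (E : C) (e1 : Hom Y E) (e2 : Hom (H HsY) E).
Hypothesis hE : is_coproduct2 e1 e2.
Variable k : Hom E HsY.
Hypotheses (hk1 : k ∘ e1 = j O) (hk2 : k ∘ e2 = phi).

Lemma j0_phi_iso : is_iso k.
Proof.
  set (s := fun n => match n as n0 return Hom (Hiter H n0 Y) E with
                     | O => e1 | S n' => e2 ∘ Fmap H (j n') end).
  destruct (coproduct_copair hHsY s) as [sigma Hsigma].
  exists sigma. split.
  - apply (coproduct2_hom_ext hE).
    + rewrite <- comp_assoc, hk1, comp_id_l. exact (Hsigma 0).
    + rewrite <- comp_assoc, hk2, comp_id_l.
      apply (coproduct_hom_ext (hpres countable_nat hHsY)). intros n.
      rewrite <- comp_assoc, hphi. exact (Hsigma (S n)).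
  - apply (coproduct_hom_ext hHsY). intros [| n]; rewrite <- comp_assoc, Hsigma, comp_id_l.
    + exact hk1.
    + simpl s. rewrite comp_assoc, hk2, hphi. reflexivity.
Qed.

Variables (D : C) (i1 : Hom Y D) (i2 : Hom (H CY) D).
Hypothesis hD : is_coproduct2 i1 i2.
Variable m : Hom E D.
Hypotheses (hm1 : m ∘ e1 = i1) (hm2 : m ∘ e2 = i2 ∘ Fmap H inl).
Variable sigma : Hom HsY E.
Hypotheses (hs1 : sigma ∘ k = idm E) (hs2 : k ∘ sigma = idm HsY).
Variable c : Hom CY D.
Hypotheses (hc1 : c ∘ inl = m ∘ sigma) (hc2 : c ∘ inr = i2 ∘ Fmap H inr ∘ t).

Lemma c_inl_j0 : c ∘ inl ∘ j 0 = i1.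
Proof. rewrite hc1, <- hk1, <- !comp_assoc, (comp_assoc sigma), hs1, comp_id_l. exact hm1. Qed.

Lemma c_inl_jS n : c ∘ inl ∘ j (S n) = i2 ∘ Fmap H (inl ∘ j n).
Proof.
  rewrite hc1, <- hphi, <- hk2, <- !comp_assoc, (comp_assoc sigma), hs1, comp_id_l,
    comp_assoc, hm2. assoc_norm. reflexivity.
Qed.

Lemma c_alg : c ∘ alg = i2.
Proof.
  apply (coproduct2_hom_ext (Fmap_coproduct2 hpres hCY)).
  - rewrite <- comp_assoc, halg1, comp_assoc, hc1, <- hk2, <- comp_assoc,
      (comp_assoc sigma k), hs1, comp_id_l. exact hm2.
  - rewrite <- comp_assoc, halg2, comp_assoc, hc2, <- comp_assoc, (proj2 htinv), comp_id_r.
    reflexivity.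
Qed.

Definition c_inv : Hom D CY := proj1_sig (coproduct2_copair hD (inl ∘ j 0) alg).
Lemma c_inv_i1 : c_inv ∘ i1 = inl ∘ j 0.
Proof. exact (proj1 (proj2_sig (coproduct2_copair hD (inl ∘ j 0) alg))). Qed.
Lemma c_inv_i2 : c_inv ∘ i2 = alg.
Proof. exact (proj2 (proj2_sig (coproduct2_copair hD (inl ∘ j 0) alg))). Qed.

Lemma c_inv_c : c_inv ∘ c = idm CY.
Proof.
  assert (Hm : c_inv ∘ m = inl ∘ k).
  { apply (coproduct2_hom_ext hE).
    - rewrite <- comp_assoc, hm1, c_inv_i1, <- comp_assoc, hk1. reflexivity.
    - rewrite <- comp_assoc, hm2, comp_assoc, c_inv_i2, halg1, <- comp_assoc, hk2.
      reflexivity. }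
  apply (coproduct2_hom_ext hCY).
  - rewrite <- comp_assoc, hc1, comp_assoc, Hm, <- comp_assoc, hs2, comp_id_r, comp_id_l.
    reflexivity.
  - rewrite <- comp_assoc, hc2, !comp_assoc, c_inv_i2, halg2, <- comp_assoc, (proj1 htinv),
      comp_id_r, comp_id_l. reflexivity.
Qed.

Lemma c_c_inv : c ∘ c_inv = idm D.
Proof.
  apply (coproduct2_hom_ext hD).
  - rewrite <- comp_assoc, c_inv_i1, comp_id_l, comp_assoc. exact c_inl_j0.
  - rewrite <- comp_assoc, c_inv_i2, comp_id_l. exact c_alg.
Qed.

End Structure.

Theorem mainTheorem2 (C : Category) (H : Functor C)
  (hext : hyper_extensive C)
  (hpres : preserves_countable_coproducts H)
  (nuH : C) (t : Hom nuH (H nuH)) (ht : is_terminal_coalgebra H t)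
  (Y : C)
  (HsY : C) (j : forall n, Hom (Hiter H n Y) HsY)
  (hHsY : is_coproduct (fun n => Hiter H n Y) j)
  (phi : Hom (H HsY) HsY)
  (hphi : forall n, phi ∘ Fmap H (j n) = j (S n))
  (CY : C) (inl : Hom HsY CY) (inr : Hom nuH CY) (hCY : is_coproduct2 inl inr)
  (tinv : Hom (H nuH) nuH)
  (htinv : tinv ∘ t = idm nuH /\ t ∘ tinv = idm (H nuH))
  (alg : Hom (H CY) CY)
  (halg1 : alg ∘ Fmap H inl = inl ∘ phi)
  (halg2 : alg ∘ Fmap H inr = inr ∘ tinv)
  (E : C) (e1 : Hom Y E) (e2 : Hom (H HsY) E) (hE : is_coproduct2 e1 e2)
  (k : Hom E HsY) (hk1 : k ∘ e1 = j O) (hk2 : k ∘ e2 = phi)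
  (D : C) (i1 : Hom Y D) (i2 : Hom (H CY) D) (hD : is_coproduct2 i1 i2)
  (m : Hom E D) (hm1 : m ∘ e1 = i1) (hm2 : m ∘ e2 = i2 ∘ Fmap H inl) :
  is_free_cia H alg (inl ∘ j O) /\
  is_iso k /\
  (forall sigma : Hom HsY E, sigma ∘ k = idm E -> k ∘ sigma = idm HsY ->
   forall c : Hom CY D,
     c ∘ inl = m ∘ sigma -> c ∘ inr = i2 ∘ Fmap H inr ∘ t ->
     is_terminal_YH_coalgebra H i1 i2 c).
Proof.
  assert (Hterminal : forall sigma : Hom HsY E, sigma ∘ k = idm E -> k ∘ sigma = idm HsY ->
            forall c : Hom CY D, c ∘ inl = m ∘ sigma -> c ∘ inr = i2 ∘ Fmap H inr ∘ t ->
            is_terminal_YH_coalgebra H i1 i2 c).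
  { intros sigma hs1 hs2 c hc1 hc2.
    apply (CY_terminal hext hpres ht hHsY hCY hD);
      [eapply c_inl_j0 | eapply c_inl_jS | exact hc2
      | apply (section_mono (r := c_inv j inl alg hD)); eapply c_inv_c]; eassumption. }
  pose proof (j0_phi_iso hpres hHsY hphi hE hk1 hk2) as Hk.
  split; [| split; [exact Hk | exact Hterminal]].
  destruct Hk as [sigma [hs1 hs2]].
  destruct (coproduct2_copair hCY (m ∘ sigma) (i2 ∘ Fmap H inr ∘ t)) as [c [hc1 hc2]].
  apply (terminal_YH_coalgebra_free_cia (proj1 hext) hD (Hterminal sigma hs1 hs2 c hc1 hc2))
    with (d := c_inv j inl alg hD).
  - eapply c_inv_c; eassumption.
  - eapply c_c_inv; eassumption.
  - eapply c_alg; eassumption.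
  - rewrite comp_assoc. eapply c_inl_j0; eassumption.
Qed.
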